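(* Let $n\geq 2$ and $q=p^h$ with $p$ prime and $h\geq 1$. The minimum weight of the code $C\cap C^\perp$, where $C=C(PG(n,q))$, is equal to $2q^{n-1}$. This weight is attained by $H_1-H_2$, the difference of the incidence vectors of two distinct hyperplanes $H_1,H_2$ of $PG(n,q)$.
   Context: $PG(n,q)$ is the Desarguesian $n$-dimensional projective space over $\mathbb{F}_q$. The code $C=C(PG(n,q))$ is the $\mathbb{F}_p$-linear span, inside $\mathbb{F}_p^{\theta_n}$ with $\theta_n=(q^{n+1}-1)/(q-1)$, of the rows of the incidence matrix whose rows are indexed by the hyperplanes and whose columns are indexed by the points of $PG(n,q)$. A row has entry $1$ if the point lies in the hyperplane and $0$ otherwise. $C^\perp$ is its dual with respect to the standard scalar product over $\mathbb{F}_p$. The weight of a vector is the size of its support, the set of nonzero coordinates, which is identified with a set of points. *)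

From HB Require Import structures.
From mathcomp Require Import all_boot all_order all_algebra all_field.
Set Implicit Arguments. Unset Strict Implicit. Unset Printing Implicit Defensive.
Import GRing.Theory.
Local Open Scope ring_scope.

(* PG(n,F): points are the 1-dimensional subspaces of F^(n+1), represented
   as the set of vectors {a v | a in F} for a nonzero v. *)
Definition is_point (F : finFieldType) (n : nat) (S : {set 'rV[F]_n.+1}) : bool :=
  [exists v : 'rV[F]_n.+1, (v != 0) && (S == [set a *: v | a : F])].

Notation point F n := {S : {set 'rV[F]_n.+1} | is_point S}.

Definition incident (F : finFieldType) (n : nat) (P : point F n) (u : 'rV[F]_n.+1) : bool :=
  [forall v in val P, (v *m u^T) == 0].

Definition hyp_of (F : finFieldType) (n : nat) (u : 'rV[F]_n.+1) : {set point F n} :=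
  [set P | incident P u].

Definition is_hyp (F : finFieldType) (n : nat) (H : {set point F n}) : bool :=
  [exists u : 'rV[F]_n.+1, (u != 0) && (H == hyp_of u)].

Notation hyperplane F n := {H : {set point F n} | is_hyp H}.

Notation word p F n := {ffun point F n -> 'F_p}.

Definition incvec (p : nat) (F : finFieldType) (n : nat) (H : {set point F n}) : word p F n :=
  [ffun P => (P \in H)%:R].

Definition in_code (p : nat) (F : finFieldType) (n : nat) (c : word p F n) : Prop :=
  exists lam : {ffun hyperplane F n -> 'F_p},
    c = [ffun P => \sum_(H : hyperplane F n) lam H * incvec p (val H) P].

Definition dotw (p : nat) (F : finFieldType) (n : nat) (c d : word p F n) : 'F_p :=
  \sum_(P : point F n) c P * d P.

Definition in_dual (p : nat) (F : finFieldType) (n : nat) (c : word p F n) : Prop :=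
  forall d : word p F n, in_code d -> dotw c d = 0.

Definition weight (p : nat) (F : finFieldType) (n : nat) (c : word p F n) : nat :=
  #|[set P | c P != 0]|.

From HB Require Import structures.
From mathcomp Require Import all_boot all_order all_algebra all_field.
From mathcomp Require Import mxabelem zify.
Import GRing.Theory.
Local Open Scope ring_scope.

Set Implicit Arguments. Unset Strict Implicit. Unset Printing Implicit Defensive.

(* Identify a point of PG(n,q) with the q - 1 nonzero vectors spanning it and a
   hyperplane H with a normal vector u_H, so that the incidence "P in H" of a
   vector v is 1 - (v.u_H)^(q-1) in F = GF(q).  Any two hyperplanes meet in
   1 mod p points, so all incidence vectors have mutual scalar product 1; hence
   a codeword c = sum_H lam_H H lies in C^perp exactly when sum_H lam_H = 0, and
   then, read in F, c(v) = G(v) := -sum_H lam_H (v.u_H)^(q-1).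

   The heart of the file is a purely algebraic bound on such power-sum forms G
   on F^k: if G is not identically zero, it is nonzero on at least
   2 (q-1) q^(k-2) vectors.  It is proved with a maximal subspace U on which G
   vanishes: on each other coset, the restriction of G to a suitable parallel
   class of lines is a nonzero polynomial of degree <= q-2, nonzero at >= 2
   points of every line.  Dividing by q - 1 gives weight >= 2 q^(n-1); the
   difference of two hyperplanes lies in C cap C^perp and has exactly this
   weight, by inclusion-exclusion on the counts q^n and q^(n-1). *)

Lemma sum_indicator (T : finType) (b : pred T) : (\sum_t (b t : nat))%N = #|b|.
Proof.
rewrite -sum1_card [RHS]big_mkcond /=.
by apply: eq_bigr => t _; rewrite unfold_in; case: (b t).
Qed.

Lemma card_xor (T : finType) (A B : pred T) :
  (#|[pred x | A x != B x]| + 2 * #|[pred x | A x && B x]| = #|A| + #|B|)%N.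
Proof.
rewrite -!sum_indicator big_distrr -!big_split; apply: eq_bigr => x _ /=.
by case: (A x); case: (B x).
Qed.

Section FiniteFieldFacts.
Variable F : finFieldType.
Local Notation q := #|F|.
Local Notation Q := (#|F|.-1).

Lemma card_gt1 : (1 < q)%N.
Proof. exact: finNzRing_gt1. Qed.

Lemma cardE_succ : q = Q.+1.
Proof. by have := card_gt1; case: #|F|. Qed.

Lemma pred_card_gt0 : (0 < Q)%N.
Proof. by have := card_gt1; case: #|F| => // -[]. Qed.

Lemma fermat (a : F) : a != 0 -> a ^+ Q = 1.
Proof.
move=> a0; have := expf_card a; rewrite cardE_succ exprS => e.
by apply: (mulfI a0); rewrite mulr1.
Qed.

Lemma zero_exp_pred_card : (0 : F) ^+ Q = 0.
Proof. by rewrite expr0n; case: Q pred_card_gt0. Qed.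

(* The indicator of zero is the polynomial function 1 - x^(q-1); this turns
   incidence into algebra. *)
Lemma indicator_eq0 (x : F) : (x == 0)%:R = 1 - x ^+ Q.
Proof.
have [->|x0] := eqVneq x 0; first by rewrite zero_exp_pred_card subr0.
by rewrite fermat // subrr.
Qed.

Lemma card_roots_lt (P : {poly F}) : P != 0 -> (#|[pred t | root P t]| < size P)%N.
Proof.
move=> P0; rewrite cardE; apply: max_poly_roots P0 _ (enum_uniq _).
by apply/allP => t; rewrite mem_enum.
Qed.

Lemma nonroots_ge (P : {poly F}) : P != 0 ->
  (q - (size P).-1 <= #|[pred t | ~~ root P t]|)%N.
Proof.
move=> P0; have := cardC [pred t | root P t]; have := card_roots_lt P0.
have -> : #|[pred t | ~~ root P t]| = #|[predC [pred t | root P t]]| by apply: eq_card.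
by move=> lt <-; rewrite leq_subLR leq_add2r -ltnS (ltn_predK lt).
Qed.

Lemma poly_vanishing_eq0 (P : {poly F}) : (size P <= q)%N ->
  (forall t, root P t) -> P = 0.
Proof.
move=> szP rootP; apply/eqP; apply: contraT => P0; have := card_roots_lt P0.
by rewrite (eq_card (B := F)) ?cardT -?cardE ?ltnNge ?szP // => t; rewrite !inE rootP.
Qed.

End FiniteFieldFacts.

Section PowerSumForm.
Variables (F : finFieldType) (k : nat).
Local Notation q := #|F|.
Local Notation Q := (#|F|.-1).
Local Notation V := 'rV[F]_k.

Definition dot (x u : V) : F := (x *m u^T) 0 0.

Lemma dotD x y u : dot (x + y) u = dot x u + dot y u.
Proof. by rewrite /dot mulmxDl mxE. Qed.

Lemma dotZ a x u : dot (a *: x) u = a * dot x u.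
Proof. by rewrite /dot -scalemxAl mxE. Qed.

Lemma dot0 u : dot 0 u = 0.
Proof. by rewrite /dot mul0mx mxE. Qed.

Variables (I : finType) (mu : I -> F) (w : I -> V).

Definition power_form (x : V) : F := \sum_i mu i * dot x (w i) ^+ Q.

Local Notation G := power_form.

Lemma power_form0 : G 0 = 0.
Proof. by rewrite /G big1 // => i _; rewrite dot0 zero_exp_pred_card mulr0. Qed.

(* G is constant on lines through the origin, since a^(q-1) = 1 for a != 0. *)
Lemma power_formZ (a : F) x : a != 0 -> G (a *: x) = G x.
Proof.
by move=> a0; apply: eq_bigr => i _; rewrite dotZ exprMn (fermat a0) mul1r.
Qed.

(* The homogeneous component of degree j of x |-> G(w0 + x), from the binomial
   expansion of (w0.w_i + x.w_i)^(q-1). *)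
Definition hcomp (w0 : V) (j : nat) (x : V) : F :=
  \sum_i mu i * ((dot w0 (w i) ^+ (Q - j) * dot x (w i) ^+ j) *+ 'C(Q, j)).

Lemma power_form_expand w0 x : G (w0 + x) = \sum_(j < Q.+1) hcomp w0 j x.
Proof.
rewrite /G /hcomp; under eq_bigr do rewrite dotD exprDn mulr_sumr.
by rewrite exchange_big.
Qed.

Lemma hcomp_top w0 x : hcomp w0 Q x = G x.
Proof. by apply: eq_bigr => i _; rewrite subnn expr0 mul1r binn mulr1n. Qed.

Definition lin_poly (x y u : V) : {poly F} := (dot x u)%:P + dot y u *: 'X.

Lemma size_lin_poly_exp x y u j : (size (lin_poly x y u ^+ j) <= j.+1)%N.
Proof.
apply: leq_trans (size_poly_exp_leq _ _) _; rewrite ltnS.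
have : (size (lin_poly x y u) <= 2)%N.
  apply: leq_trans (size_polyD _ _) _; rewrite geq_max.
  rewrite (leq_trans (size_polyC_leq1 _)) //.
  by rewrite (leq_trans (size_scale_leq _ _)) // size_polyX.
by case: (size _) => [|[|[|]]] //= _; rewrite ?mul0n ?mul1n.
Qed.

Lemma coef_lin_poly_exp x y u j : (lin_poly x y u ^+ j)`_j = dot y u ^+ j.
Proof.
elim: j => [|j IH]; first by rewrite !expr0 coefC.
rewrite exprSr {2}/lin_poly mulrDr coefD coefMC -scalerAr coefZ coefMX /= IH.
by rewrite (nth_default _ (size_lin_poly_exp _ _ _ _)) mul0r add0r exprSr mulrC.
Qed.

(* The restriction t |-> hcomp w0 j (x + t y) of a component to a line, as a
   polynomial of degree <= j whose coefficient of t^j is hcomp w0 j y. *)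
Definition hcomp_line (w0 : V) (j : nat) (x y : V) : {poly F} :=
  \sum_i (mu i * (dot w0 (w i) ^+ (Q - j) *+ 'C(Q, j))) *: lin_poly x y (w i) ^+ j.

Lemma hcomp_lineE w0 j x y t : (hcomp_line w0 j x y).[t] = hcomp w0 j (x + t *: y).
Proof.
rewrite /hcomp_line /hcomp horner_sum; apply: eq_bigr => i _.
rewrite hornerZ horner_exp /lin_poly hornerD hornerC hornerZ hornerX dotD dotZ.
by rewrite -mulrA mulrnAl [t * _]mulrC.
Qed.

Lemma size_hcomp_line w0 j x y : (size (hcomp_line w0 j x y) <= j.+1)%N.
Proof.
apply: leq_trans (size_sum _ _ _) _; apply/bigmax_leqP => i _.
exact: leq_trans (size_scale_leq _ _) (size_lin_poly_exp _ _ _ _).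
Qed.

Lemma coef_hcomp_line w0 j x y : (hcomp_line w0 j x y)`_j = hcomp w0 j y.
Proof.
rewrite /hcomp_line /hcomp coef_sum; apply: eq_bigr => i _.
by rewrite coefZ coef_lin_poly_exp -mulrA mulrnAl.
Qed.

Lemma hcomp_line_eq0 (U : {vspace V}) w0 j x y :
  (j < q)%N -> x \in U -> y \in U -> (forall z, z \in U -> hcomp w0 j z = 0) ->
  hcomp_line w0 j x y = 0.
Proof.
move=> jq xU yU hU.
apply: poly_vanishing_eq0 (leq_trans (size_hcomp_line _ _ _ _) jq) _.
by move=> t; rewrite /root hcomp_lineE hU // memvD ?memvZ.
Qed.

(* If G vanishes on U but not on the coset w0 + U, let d be the largest degree of
   a component not vanishing on U: then d < q-1 because the top component is G,
   and some y in U has hcomp w0 d y != 0. *)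
Lemma top_component (U : {vspace V}) w0 :
  (forall x, x \in U -> G x = 0) -> (exists2 x, x \in U & G (w0 + x) != 0) ->
  exists d, exists2 y, y \in U &
    [/\ (d < Q)%N, hcomp w0 d y != 0 &
        forall j x, (d < j <= Q)%N -> x \in U -> hcomp w0 j x = 0].
Proof.
move=> GU [x0 x0U nz].
pose P j := (j <= Q)%N && [exists x, (x \in U) && (hcomp w0 j x != 0)].
have [j nzj] : exists j : 'I_Q.+1, hcomp w0 j x0 != 0.
  apply/existsP; apply: contraNT nz => /existsPn all0.
  by rewrite power_form_expand big1 // => j _; apply/eqP/negbNE/all0.
have exP : exists j, P j.
  by exists j; rewrite /P -ltnS ltn_ord; apply/existsP; exists x0; rewrite x0U.
have ubP i : P i -> (i <= Q)%N by case/andP.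
have [d /andP[dQ /existsP[y /andP[yU nzy]]] maxd] := ex_maxnP exP ubP.
exists d, y => //; split => // [|i x /andP[di iQ] xU].
  rewrite ltn_neqAle dQ andbT; apply: contraNneq nzy => ->.
  by rewrite hcomp_top GU.
apply/eqP; apply: contraT => nzx; have := maxd i; rewrite leqNgt di /P iQ /=.
by apply; apply/existsP; exists x; rewrite xU.
Qed.

(* With d and y as in top_component, on every line x + F y of U the function
   t |-> G(w0 + x + t y) is a nonzero polynomial of degree d <= q-2 (its t^d
   coefficient is hcomp w0 d y), so it is nonzero at least twice. *)
Lemma line_nonzeros (U : {vspace V}) w0 d x y :
  (d < Q)%N -> y \in U -> hcomp w0 d y != 0 ->
  (forall j z, (d < j <= Q)%N -> z \in U -> hcomp w0 j z = 0) -> x \in U ->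
  (2 <= #|[pred t | G (w0 + (x + t *: y)) != 0%R]|)%N.
Proof.
move=> dQ yU nzy high xU.
pose L := \sum_(j < Q.+1) hcomp_line w0 j x y.
have LE t : L.[t] = G (w0 + (x + t *: y)).
  by rewrite horner_sum power_form_expand; apply: eq_bigr => j _; rewrite hcomp_lineE.
have high_line j : (d < j)%N -> (j < Q.+1)%N -> hcomp_line w0 j x y = 0.
  move=> dj jQ; apply: (hcomp_line_eq0 (U := U)) => //; first by rewrite cardE_succ.
  by move=> z; apply: high; rewrite dj.
have szL : (size L <= d.+1)%N.
  apply: leq_trans (size_sum _ _ _) _; apply/bigmax_leqP => j _.
  have [jd|dj] := leqP j d; first exact: leq_trans (size_hcomp_line _ _ _ _) _.
  by rewrite high_line ?size_poly0.
have coefL : L`_d = hcomp w0 d y.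
  rewrite coef_sum (bigD1 (Ordinal (ltnW dQ : (d < Q.+1)%N))) //= coef_hcomp_line.
  rewrite big1 ?addr0 // => j ne; have [jd|dj|jd] := ltngtP j d.
  - by rewrite nth_default // (leq_trans (size_hcomp_line _ _ _ _)).
  - by rewrite high_line ?coef0.
  - by move: ne; rewrite -val_eqE /= jd eqxx.
have L0 : L != 0 by apply: contraNneq nzy => L0; rewrite -coefL L0 coef0.
have nonrootsE :
    #|[pred t | ~~ root L t]| = #|[pred t | G (w0 + (x + t *: y)) != 0%R]|.
  by apply: eq_card => t; rewrite !inE /root LE.
rewrite -nonrootsE; apply: leq_trans (nonroots_ge L0); rewrite cardE_succ.
by move: szL dQ; case: (size L) => [|s] /=; lia.
Qed.

Lemma translate_sum (P : pred V) (g : V -> nat) z :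
  (forall x, P (x + z) = P x) -> (\sum_(x | P x) g (x + z)%R = \sum_(x | P x) g x)%N.
Proof.
by move=> Pz; rewrite [RHS](reindex_inj (addIr z)) /=; apply: eq_bigl => x; rewrite Pz.
Qed.

(* Coset bound: if G vanishes on U but not on w0 + U, then G is nonzero on at
   least 2|U|/q points of w0 + U (the q^(r-1) parallel lines each give 2 points). *)
Lemma coset_bound (U : {vspace V}) w0 :
  (forall x, x \in U -> G x = 0) -> (exists2 x, x \in U & G (w0 + x) != 0) ->
  (2 * #|U| <= q * \sum_(x in U) (G (w0 + x)%R != 0%R : nat))%N.
Proof.
move=> GU ex; have [d [y yU [dQ nzy high]]] := top_component GU ex.
have lines : (\sum_(x in U) 2 <=
               \sum_(x in U) \sum_t (G (w0 + (x + t *: y))%R != 0%R : nat))%N.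
  apply: leq_sum => x xU.
  by have := line_nonzeros dQ yU nzy high xU; rewrite -sum_indicator.
rewrite exchange_big /= sum_nat_const mulnC in lines; apply: leq_trans lines _.
under eq_bigr => t _.
  rewrite (translate_sum (fun x => (G (w0 + x)%R != 0%R : nat))); last first.
    by move=> x; rewrite rpredDr // memvZ.
  over.
by rewrite sum_nat_const cardT -cardE.
Qed.

Lemma dim_addv_line (U : {vspace V}) v : v \notin U -> (\dim U < \dim (U + <[v]>)%VS)%N.
Proof.
move=> vU; have [le e] := dimv_leqif_sup (addvSl U <[v]>).
rewrite ltn_neqAle le andbT e; apply: contra vU => sub.
by rewrite memvE (subv_trans (addvSr U <[v]>) sub).
Qed.

Lemma dimv_le (U : {vspace V}) : (\dim U <= k)%N.
Proof. by apply: leq_trans (dimvS (subvf U)) _; rewrite dimvf /dim /= mul1n. Qed.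

Definition vanishes_on (U : {vspace V}) : bool := [forall x, (x \in U) ==> (G x == 0)].

Lemma vanishes_onP (U : {vspace V}) : reflect (forall x, x \in U -> G x = 0) (vanishes_on U).
Proof.
apply: (iffP forallP) => [h x xU | h x]; first by apply/eqP; move/implyP: (h x); apply.
by apply/implyP => /h ->.
Qed.

(* Take U maximal among subspaces on which G vanishes (by induction on the
   codimension): then G is not identically zero on any other coset of U. *)
Lemma maximal_vanishing_subspace : exists2 U : {vspace V}, vanishes_on U &
  forall v, v \notin U -> exists2 x, x \in U & G (v + x) != 0.
Proof.
have [m] := ubnP (k - \dim (0 : {vspace V}))%N.
have : vanishes_on 0.
  by apply/vanishes_onP => x; rewrite memv0 => /eqP ->; exact: power_form0.
elim: m (0%VS) => // m IH U VU hm.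
have [/existsP[v /andP[vU VUv]] | noext] :=
  boolP [exists v, (v \notin U) && vanishes_on (U + <[v]>)%VS].
  apply: (IH _ VUv); have := dim_addv_line vU; have := dimv_le (U + <[v]>)%VS.
  move: hm; move: (\dim U) (\dim (U + <[v]>)%VS) => a b; lia.
exists U => // v vU; apply/exists_inP.
apply: contraNT noext; rewrite negb_exists_in => /forall_inP all0.
apply/existsP; exists v; rewrite vU /=.
apply/vanishes_onP => z /memv_addP[u uU [z2 /vlineP[a ->] ->]].
have [->|a0] := eqVneq a 0; first by rewrite scale0r addr0; move/vanishes_onP: VU; apply.
have uaU : a^-1 *: u \in U by rewrite memvZ.
rewrite -(power_formZ _ (invr_neq0 a0)) scalerDr scalerA mulVf // scale1r addrC.
by apply/eqP/negbNE/all0.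
Qed.

(* The cosets v + U, v outside U, cover
   q^k - q^r >= (q-1) q^(k-1) vectors and each contributes 2|U|/q nonzeros. *)
Theorem power_form_support : (2 <= k)%N -> (exists v, G v != 0) ->
  (2 * Q * q ^ (k - 2) <= #|[pred v | G v != 0%R]|)%N.
Proof.
move=> k2 [v0 Gv0]; have [U /vanishes_onP GU ext] := maximal_vanishing_subspace.
have rk : (\dim U < k)%N.
  have v0U : v0 \notin U by apply: contra Gv0 => /GU ->.
  exact: leq_trans (dim_addv_line v0U) (dimv_le _).
pose Z := (\sum_(v | v \notin U) (G v != 0%R : nat))%N.
have -> : #|[pred v | G v != 0%R]| = Z.
  rewrite -sum_indicator (bigID (fun v => v \in U)) /= big1 ?add0n // => v vU.
  by rewrite GU ?eqxx.
have ZE : (#|U| * Z = \sum_(v | v \notin U) \sum_(u in U) (G (v + u)%R != 0%R : nat))%N.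
  rewrite exchange_big /= -sum_nat_const /Z; apply: eq_bigr => u uU.
  by rewrite (translate_sum (fun v => (G v != 0)%R : nat)) // => v; rewrite rpredDr.
have cosets : (#|[predC U]| * (2 * #|U|) <= q * (#|U| * Z))%N.
  rewrite ZE big_distrr /= -sum_nat_const; apply: leq_sum => v vU.
  exact: coset_bound GU (ext v vU).
have cardCU : #|[predC U]| = (q ^ k - q ^ \dim U)%N.
  by have := cardC U; rewrite card_mx mul1n card_vspace => <-; rewrite addKn.
have qk : (q ^ k = q * (q * q ^ (k - 2)))%N by rewrite -!expnS -add2n subnKC.
have qr : (q ^ \dim U <= q * q ^ (k - 2))%N.
  by rewrite -expnS leq_exp2l ?card_gt1 //; lia.
have U0 : (0 < q ^ \dim U)%N by rewrite expn_gt0 ltnW ?card_gt1.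
rewrite cardCU card_vspace qk in cosets; move: U0 cosets qr; rewrite cardE_succ /=.
by move: (_ ^ (k - 2))%N (_ ^ \dim U)%N => A B; nia.
Qed.

End PowerSumForm.

Section ProjectivePoints.
Variables (F : finFieldType) (n : nat).
Local Notation q := #|F|.
Local Notation Q := (#|F|.-1).
Local Notation V := 'rV[F]_n.+1.

Definition span1 (v : V) : {set V} := [set a *: v | a : F].

Lemma mem_span1 (x v : V) : reflect (exists a, x = a *: v) (x \in span1 v).
Proof. by apply: (iffP imsetP) => [[a _ ->] | [a ->]]; exists a. Qed.

Lemma span1_point (v : V) : v != 0 -> is_point (span1 v).
Proof. by move=> v0; apply/existsP; exists v; rewrite v0 eqxx. Qed.

Lemma const1_neq0 : const_mx 1 != 0 :> V.
Proof. by apply/eqP => /matrixP /(_ 0 0); rewrite !mxE; apply/eqP; exact: oner_neq0. Qed.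

(* The projective point of a vector (an arbitrary point for the zero vector). *)
Definition point_of (v : V) : point F n :=
  insubd (exist _ (span1 (const_mx 1)) (span1_point const1_neq0) : point F n) (span1 v).

Lemma val_point_of v : v != 0 -> val (point_of v) = span1 v.
Proof. by move=> v0; rewrite val_insubd span1_point. Qed.

Lemma point_rep (P : point F n) : exists2 v : V, v != 0 & val P = span1 v.
Proof. by case/existsP: (valP P) => v /andP[v0 /eqP ->]; exists v. Qed.

Lemma span1Z (v : V) (a : F) : a != 0 -> span1 (a *: v) = span1 v.
Proof.
move=> a0; apply/setP => x; apply/mem_span1/mem_span1 => [[b ->] | [b ->]].
  by exists (b * a); rewrite scalerA.
by exists (b / a); rewrite scalerA mulfVK.
Qed.

Lemma point_ofE (v : V) (P : point F n) : v != 0 -> (point_of v == P) = (v \in val P).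
Proof.
move=> v0; have [w w0 Pw] := point_rep P.
apply/eqP/idP => [<- | ].
  by rewrite val_point_of //; apply/mem_span1; exists 1; rewrite scale1r.
rewrite Pw => /mem_span1 [a va]; apply: val_inj; rewrite val_point_of // Pw va span1Z //.
by apply: contraNneq v0 => a0; rewrite va a0 scale0r.
Qed.

Lemma card_span1 (v : V) : v != 0 -> #|span1 v| = q.
Proof.
move=> v0; rewrite card_imset // => a b /eqP.
by rewrite -subr_eq0 -scalerBl scaler_eq0 (negbTE v0) orbF subr_eq0 => /eqP.
Qed.

Lemma card_fiber (P : point F n) : #|[pred v : V | (v != 0) && (point_of v == P)]| = Q.
Proof.
have [w w0 Pw] := point_rep P.
have fiberE : [pred v : V | (v != 0) && (point_of v == P)] =i val P :\ 0.
  by move=> v; rewrite !inE; have [->|v0] //= := eqVneq v 0; rewrite point_ofE.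
rewrite (eq_card fiberE); have := cardsD1 0 (val P); rewrite Pw card_span1 //.
have -> : (0 : V) \in span1 w by apply/mem_span1; exists 0; rewrite scale0r.
by move=> ->.
Qed.

Lemma card_points (A : {set point F n}) :
  (#|A| * Q)%N = #|[pred v : V | (v != 0) && (point_of v \in A)]|.
Proof.
have -> : #|[pred v : V | (v != 0) && (point_of v \in A)]| =
          (\sum_(v : V | v != 0%R) ((point_of v \in A) : nat))%N.
  rewrite -sum_indicator [RHS]big_mkcond.
  by apply: eq_bigr => v _; rewrite /=; case: (v != 0).
rewrite -(sum_indicator (mem A)) big_distrl (partition_big point_of predT) //=.
apply: eq_bigr => P _; rewrite (eq_bigr (fun _ => (P \in A) : nat)).
  by rewrite sum_nat_const card_fiber mulnC.
by move=> v /andP[_ /eqP ->].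
Qed.

Lemma card_nonzero (f : pred V) : #|[pred v | (v != 0) && f v]| = (#|f| - f 0%R)%N.
Proof.
rewrite (cardD1 0 f); have -> : (0 \in f) = f 0 by [].
by rewrite addKn; apply: eq_card => v; rewrite !inE.
Qed.

Lemma card_points_by_vectors (A : {set point F n}) (f : pred V) :
  (forall v, v != 0 -> (point_of v \in A) = f v) -> (#|A| * Q)%N = (#|f| - f 0%R)%N.
Proof.
move=> Af; rewrite card_points -card_nonzero; apply: eq_card => v; rewrite !inE.
by have [->|v0] //= := eqVneq v 0; rewrite Af.
Qed.

Lemma mx11_eq0 (A : 'M[F]_1) : (A == 0) = (A 0 0 == 0).
Proof.
apply/eqP/eqP => [-> | A0]; first by rewrite mxE.
by apply/matrixP => i j; rewrite !ord1 A0 mxE.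
Qed.

Lemma incident_point_of (v u : V) : v != 0 -> (point_of v \in hyp_of u) = (dot v u == 0).
Proof.
move=> v0; rewrite inE /incident val_point_of //; apply/forall_inP/idP => [vu | vu x].
  by rewrite /dot -mx11_eq0 vu //; apply/mem_span1; exists 1; rewrite scale1r.
by case/mem_span1 => a ->; rewrite -scalemxAl mx11_eq0 mxE -/(dot v u) (eqP vu) mulr0.
Qed.

Lemma card_kernel m (M : 'M[F]_(n.+1, m)) :
  #|[pred v : V | v *m M == 0]| = (q ^ (n.+1 - \rank M))%N.
Proof. by rewrite -mxrank_ker -card_rowg; apply: eq_card => v; rewrite !inE sub_kermx. Qed.

Lemma card_hyperplane_vecs (a : V) : a != 0 -> #|[pred v : V | dot v a == 0]| = (q ^ n)%N.
Proof.
move=> a0; have := card_kernel a^T; rewrite mxrank_tr rank_rV a0 subn1 /= => <-.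
by apply: eq_card => v; rewrite !inE mx11_eq0.
Qed.

Lemma card_two_hyperplanes_vecs (a b : V) :
  #|[pred v : V | (dot v a == 0) && (dot v b == 0)]| = (q ^ (n.+1 - \rank (col_mx a b)))%N.
Proof.
rewrite -mxrank_tr -card_kernel; apply: eq_card => v.
by rewrite !inE tr_col_mx mul_mx_row row_mx_eq0 !mx11_eq0.
Qed.

Lemma hyp_ofZ (u : V) (a : F) : a != 0 -> hyp_of (a *: u) = hyp_of u.
Proof.
move=> a0; apply/setP => P; rewrite !inE /incident; apply: eq_forallb => x.
by rewrite linearZ -scalemxAr scaler_eq0 (negbTE a0).
Qed.

Lemma is_hyp_of (u : V) : u != 0 -> is_hyp (hyp_of u).
Proof. by move=> u0; apply/existsP; exists u; rewrite u0 eqxx. Qed.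

Definition some_hyperplane : hyperplane F n :=
  exist _ (hyp_of (const_mx 1)) (is_hyp_of const1_neq0).

Definition normal (H : hyperplane F n) : V := xchoose (existsP (valP H)).

Lemma normalP (H : hyperplane F n) : normal H != 0 /\ val H = hyp_of (normal H).
Proof. by have /andP[-> /eqP ->] := xchooseP (existsP (valP H)). Qed.

Lemma rank_normals (H1 H2 : hyperplane F n) :
  H1 != H2 -> \rank (col_mx (normal H1) (normal H2)) = 2%N.
Proof.
move=> H12; have [a0 Ha] := normalP H1; have [b0 Hb] := normalP H2.
have indep : ~~ (normal H1 <= normal H2)%MS.
  apply: contra H12 => /sub_rVP [k ak]; apply/eqP/val_inj.
  have k0 : k != 0 by apply: contraNneq a0 => k0; rewrite ak k0 scale0r.
  by rewrite Ha Hb ak hyp_ofZ.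
apply/eqP; rewrite eqn_leq rank_leq_row /= -addsmxE.
apply: leq_trans (rank_ltmx (_ : (normal H2 < normal H1 + normal H2)%MS)).
  by rewrite rank_rV b0.
by rewrite ltmxE addsmxSr /= addsmx_sub negb_and indep.
Qed.

End ProjectivePoints.

Section PrimeSubfield.
Variables (F : finFieldType) (p : nat).
Hypotheses (hp : prime p) (charFp : p \in [pchar F]).

Definition iota (x : 'F_p) : F := (x : nat)%:R.

Lemma val_FpD (x y : 'F_p) : ((x + y)%R : nat) = ((x + y) %% p)%N.
Proof. exact: (congr1 (modn _) (Fp_cast hp)). Qed.

Lemma val_FpM (x y : 'F_p) : ((x * y)%R : nat) = ((x * y) %% p)%N.
Proof. exact: (congr1 (modn _) (Fp_cast hp)). Qed.

Lemma iotaD x y : iota (x + y) = iota x + iota y.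
Proof. by rewrite /iota val_FpD GRing.natr_mod_pchar // natrD. Qed.

Lemma iotaM x y : iota (x * y) = iota x * iota y.
Proof. by rewrite /iota val_FpM GRing.natr_mod_pchar // natrM. Qed.

Lemma iota_sum (I : finType) (f : I -> 'F_p) : iota (\sum_i f i) = \sum_i iota (f i).
Proof. exact: (big_morph iota iotaD). Qed.

Lemma iota_nat (m : nat) : iota m%:R = m%:R.
Proof. by rewrite /iota val_Fp_nat // GRing.natr_mod_pchar. Qed.

Lemma iota1 : iota 1 = 1.
Proof. exact: (iota_nat 1). Qed.

Lemma iota_eq0 x : (iota x == 0) = (x == 0).
Proof.
rewrite /iota -(dvdn_pcharf charFp); apply/idP/eqP => [px | ->]; last exact: dvdn0.
have xp : ((x : nat) < p)%N by rewrite -[X in (_ < X)%N](Fp_cast hp) ltn_ord.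
by apply: val_inj; apply/eqP; apply: contraTT px => x0; rewrite gtnNdvd ?lt0n.
Qed.

Lemma iota_inj : injective iota.
Proof.
move=> x y e; apply/eqP; rewrite -subr_eq0 -iota_eq0; apply/eqP.
by apply: (addIr (iota y)); rewrite -iotaD subrK e add0r.
Qed.

End PrimeSubfield.

Section WordAlgebra.
Variables (p : nat) (F : finFieldType) (n : nat).
Local Notation word := (word p F n).

Lemma dotwC (c d : word) : dotw c d = dotw d c.
Proof. by apply: eq_bigr => P _; rewrite mulrC. Qed.

Lemma dotwBl (c d e : word) : dotw (c - d) e = dotw c e - dotw d e.
Proof. by rewrite /dotw -sumrB; apply: eq_bigr => P _; rewrite !ffunE mulrBl. Qed.

Definition combination (lam : {ffun hyperplane F n -> 'F_p}) : word :=
  [ffun P => \sum_H lam H * incvec p (val H) P].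

Lemma dotw_combination (d : word) lam :
  dotw d (combination lam) = \sum_H lam H * dotw d (incvec p (val H)).
Proof.
rewrite /dotw; under eq_bigr do rewrite ffunE mulr_sumr.
rewrite exchange_big; apply: eq_bigr => H _; rewrite mulr_sumr.
by apply: eq_bigr => P _; rewrite mulrCA.
Qed.

Lemma combination_delta (H0 : hyperplane F n) :
  combination [ffun H => (H == H0)%:R] = incvec p (val H0).
Proof.
apply/ffunP => P; rewrite /incvec !ffunE (bigD1 H0) //= !ffunE eqxx mul1r.
by rewrite big1 ?addr0 // => H /negbTE HH0; rewrite ffunE HH0 mul0r.
Qed.

Lemma in_code_incvec (H : hyperplane F n) : in_code (incvec p (val H)).
Proof. by exists [ffun H' => (H' == H)%:R]; rewrite -combination_delta. Qed.

Lemma in_codeB (c d : word) : in_code c -> in_code d -> in_code (c - d).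
Proof.
move=> [lam ->] [mu ->]; exists (lam - mu); apply/ffunP => P.
by rewrite !ffunE -sumrB; apply: eq_bigr => H _; rewrite !ffunE mulrBl.
Qed.

Lemma natr_bool_sub_eq0 (b1 b2 : bool) : ((b1%:R - b2%:R : 'F_p) != 0) = (b1 != b2).
Proof. by case: b1; case: b2; rewrite ?subrr ?eqxx ?subr0 ?sub0r ?oppr_eq0 ?oner_eq0. Qed.

End WordAlgebra.

Section HyperplaneCode.
Variables (n p h : nat) (F : finFieldType).
Hypotheses (n2 : (2 <= n)%N) (hp : prime p) (hh : (0 < h)%N) (hF : #|F| = (p ^ h)%N).
Local Notation q := #|F|.
Local Notation Q := (#|F|.-1).
Local Notation V := 'rV[F]_n.+1.

Let charFp : p \in [pchar F] := card_finPcharP hF hp.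
Local Notation iota := (iota F).
Local Notation normal := (@normal F n).

Lemma card_natr0 : (q%:R : F) = 0.
Proof. by rewrite hF natrX (pcharf0 charFp) expr0n; case: h hh. Qed.

Lemma natr_eq1_of_count (m e : nat) : (0 < e)%N -> (m * Q = q ^ e - 1)%N -> (m%:R : F) = 1.
Proof.
move=> e0 /(congr1 (fun k : nat => (k%:R : F))).
have Qm1 : (Q%:R : F) = -1 by apply/eqP; rewrite -addr_eq0 natr1 -cardE_succ card_natr0.
have qe : (1 <= q ^ e)%N by rewrite expn_gt0 ltnW // card_gt1.
rewrite natrM natrB // natrX card_natr0 expr0n (gtn_eqF e0) Qm1 /= sub0r mulrN1.
exact: oppr_inj.
Qed.

(* Any two hyperplanes (possibly equal) of PG(n,q), n >= 2, meet in a number of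
   points congruent to 1 mod p: their common vectors form a space of dimension >= 1. *)
Lemma hyperplanes_meet (a b : V) : (#|hyp_of a :&: hyp_of b|%:R : F) = 1.
Proof.
apply: (natr_eq1_of_count (e := n.+1 - \rank (col_mx a b))).
  by have := rank_leq_row (col_mx a b); move: (\rank _) => r; lia.
rewrite -card_two_hyperplanes_vecs.
rewrite (card_points_by_vectors (f := [pred v | (dot v a == 0) && (dot v b == 0)])).
  by rewrite /= !dot0 eqxx.
by move=> v v0; rewrite in_setI !incident_point_of.
Qed.

Lemma iota_dotw_incvec (A B : {set point F n}) :
  iota (dotw (incvec p A) (incvec p B)) = #|A :&: B|%:R.
Proof.
have -> : #|A :&: B| = #|[pred P | (P \in A) && (P \in B)]|.
  by apply: eq_card => P; rewrite in_setI.
rewrite /dotw (iota_sum hp charFp) -sum_indicator natr_sum; apply: eq_bigr => P _.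
rewrite (iotaM hp charFp) !ffunE !(iota_nat hp charFp) -natrM /=.
by case: (P \in A); rewrite ?mul1n ?mul0n.
Qed.

Lemma dotw_hyperplanes (H H' : hyperplane F n) :
  dotw (incvec p (val H)) (incvec p (val H')) = 1.
Proof.
apply: (iota_inj hp charFp); rewrite iota_dotw_incvec (iota1 hp charFp).
have [a /andP[_ /eqP ->]] := existsP (valP H).
have [b /andP[_ /eqP ->]] := existsP (valP H').
by rewrite hyperplanes_meet.
Qed.

Lemma dotw_incvec_combination (H : hyperplane F n) (lam : {ffun hyperplane F n -> 'F_p}) :
  dotw (incvec p (val H)) (combination lam) = \sum_H' lam H'.
Proof. by rewrite dotw_combination; apply: eq_bigr => H' _; rewrite dotw_hyperplanes mulr1. Qed.

Lemma iota_incvec_point (H : hyperplane F n) (v : V) : v != 0 ->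
  iota (incvec p (val H) (point_of v)) = 1 - dot v (normal H) ^+ Q.
Proof.
move=> v0; rewrite ffunE (iota_nat hp charFp) (normalP H).2 incident_point_of //.
exact: indicator_eq0.
Qed.

Lemma combination_power_form (lam : {ffun hyperplane F n -> 'F_p}) :
  \sum_H lam H = 0 -> forall v : V, v != 0 ->
  iota (combination lam (point_of v)) = power_form (fun H => - iota (lam H)) normal v.
Proof.
move=> lam0 v v0; rewrite ffunE (iota_sum hp charFp) /power_form.
under eq_bigr do rewrite (iotaM hp charFp) iota_incvec_point // mulrBr mulr1.
rewrite sumrB -(iota_sum hp charFp) lam0 sub0r -sumrN.
by apply: eq_bigr => H _; rewrite mulNr.
Qed.

Lemma weight_mulQ (c : word p F n) (f : pred V) :
  (forall v, v != 0 -> (c (point_of v) != 0) = f v) -> (weight c * Q)%N = (#|f| - f 0%R)%N.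
Proof. by move=> cf; apply: card_points_by_vectors => v v0; rewrite inE cf. Qed.

(* Lower bound: a nonzero codeword of C cap C^perp has sum of coefficients 0
   (it is orthogonal to a hyperplane), so it is a power-sum form on F^(n+1),
   whose support has at least 2 (q-1) q^(n-1) vectors, i.e. 2 q^(n-1) points. *)
Theorem dual_code_min_weight (c : word p F n) :
  in_code c -> in_dual c -> c != 0 -> (2 * q ^ (n - 1) <= weight c)%N.
Proof.
move=> [lam cE] dual c0; rewrite -/(combination lam) in cE.
have lam0 : \sum_H lam H = 0.
  rewrite -(dotw_incvec_combination (some_hyperplane F n)) -cE dotwC.
  exact: dual _ (in_code_incvec p _).
pose G := power_form (fun H => - iota (lam H)) normal.
have cG v : v != 0 -> (c (point_of v) != 0) = (G v != 0).
  by move=> v0; rewrite -(iota_eq0 hp charFp) cE combination_power_form.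
have := weight_mulQ cG; rewrite /G power_form0 eqxx subn0 => wQ.
have [v Gv] : exists v, G v != 0.
  have [P cP] : exists P, c P != 0.
    apply/existsP; apply: contraNT c0 => /existsPn c0.
    by apply/eqP/ffunP => P; rewrite ffunE; apply/eqP/negbNE/c0.
  have [v v0 Pv] := point_rep P; exists v; rewrite -cG //.
  suff -> : point_of v = P by [].
  by apply/eqP; rewrite point_ofE // Pv; apply/mem_span1; exists 1; rewrite scale1r.
have := power_form_support (leqW n2) (ex_intro _ v Gv).
by rewrite -wQ subSS mulnAC leq_pmul2r // pred_card_gt0.
Qed.

Lemma weight_hyperplane_difference (H1 H2 : hyperplane F n) : H1 != H2 ->
  weight (incvec p (val H1) - incvec p (val H2)) = (2 * q ^ (n - 1))%N.
Proof.
move=> H12; have [[a0 Ha] [b0 Hb]] := (normalP H1, normalP H2).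
set a := normal H1 in a0 Ha *; set b := normal H2 in b0 Hb *.
have wQ : (weight (incvec p (val H1) - incvec p (val H2))%R * Q =
           #|[pred v : V | (dot v a == 0%R) != (dot v b == 0%R)]|)%N.
  rewrite (weight_mulQ (f := [pred v : V | (dot v a == 0) != (dot v b == 0)])) /=.
    by rewrite !dot0 eqxx subn0.
  by move=> v v0; rewrite !ffunE natr_bool_sub_eq0 Ha Hb !incident_point_of.
have := card_xor [pred v : V | dot v a == 0] [pred v : V | dot v b == 0].
rewrite /= card_two_hyperplanes_vecs rank_normals // !card_hyperplane_vecs // -wQ subSS.
have -> : (q ^ n = q * q ^ (n - 1))%N by rewrite -expnS subn1 prednK // ltnW.
move=> e; apply/eqP; rewrite -(eqn_pmul2r (pred_card_gt0 F)); apply/eqP; move: e.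
by rewrite cardE_succ /=; move: (_ ^ (n - 1))%N => A; nia.
Qed.

Theorem hyperplane_difference (H1 H2 : hyperplane F n) : H1 != H2 ->
  [/\ in_code (incvec p (val H1) - incvec p (val H2)),
      in_dual (incvec p (val H1) - incvec p (val H2)) &
      weight (incvec p (val H1) - incvec p (val H2)) = (2 * q ^ (n - 1))%N].
Proof.
move=> H12; split; last exact: weight_hyperplane_difference.
- exact: in_codeB (in_code_incvec p _) (in_code_incvec p _).
- by move=> d [lam ->]; rewrite dotwBl !dotw_incvec_combination subrr.
Qed.

End HyperplaneCode.

Unset Implicit Arguments.

Theorem mainTheorem1 (n p h : nat) (hn : (2 <= n)%N) (hp : prime p) (hh : (0 < h)%N)
    (F : finFieldType) (hF : #|F| = (p ^ h)%N) :
  (forall c : word p F n, in_code c -> in_dual c -> c != 0 ->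
      (2 * (p ^ h) ^ (n - 1) <= weight c)%N) /\
  (forall H1 H2 : hyperplane F n, H1 != H2 ->
      [/\ in_code (incvec p (val H1) - incvec p (val H2)),
          in_dual (incvec p (val H1) - incvec p (val H2)) &
          weight (incvec p (val H1) - incvec p (val H2)) = (2 * (p ^ h) ^ (n - 1))%N]).
Proof.
rewrite -hF; split.
- exact: dual_code_min_weight hn hp hh hF.
- exact: hyperplane_difference hn hp hh hF.
Qed.
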